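(* Let $G$ be a bipartite TRVG with respect to the torus, with a rectangle representation on the torus in which the rectangles of one part are $g_1,\dots,g_p$ and the rectangles of the other part are $r_1,\dots,r_q$. If, for each $i\in\{1,\dots,p\}$, $g_i$ sees exactly $\alpha_i$ of the rectangles $r_1,\dots,r_q$ horizontally, then \[ q\ \ge\ \alpha_1+\alpha_2+\cdots+\alpha_p-p. \]
   Context: View the torus as an axis-parallel rectangle $[0,W]\times[0,H]$ with opposite sides identified; horizontal lines $y=c$ and vertical lines $x=c$ are closed curves on it. A graph $G$ is a TRVG with respect to the torus if its vertices can be represented by a collection of pairwise non-overlapping axis-parallel rectangles on this torus (possibly wrapping across the identified sides), one per vertex, such that two distinct vertices are adjacent if and only if some horizontal or vertical line of the torus intersects the interiors of both of their rectangles (other rectangles do not block visibility). Two rectangles see each other horizontally if some horizontal line of the torus meets the interiors of both. *)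

From HB Require Import structures.
From mathcomp Require Import all_boot all_order all_algebra.
From mathcomp Require Import boolp reals.
Set Implicit Arguments. Unset Strict Implicit. Unset Printing Implicit Defensive.
Import Order.TTheory GRing.Theory Num.Theory.
Local Open Scope ring_scope.

(* The torus is [0,W] x [0,H] with opposite sides identified, i.e. (R/WZ) x (R/HZ).
   A rectangle on the torus is the image of [x, x+w] x [y, y+h] (0 < w < W, 0 < h < H),
   possibly wrapping across the identified sides. *)
Record trect (R : realType) := TRect { rx : R; ry : R; rw : R; rh : R }.

(* t (mod L) lies in the open arc (x, x+w) of the circle R/LZ. *)
Definition in_arc (R : realType) (L x w t : R) : Prop :=
  exists k : int, x < t + k%:~R * L < x + w.

Definition rect_ok (R : realType) (W H : R) (r : trect R) : Prop :=
  (0 < rw r < W) /\ (0 < rh r < H).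

(* some horizontal line y = c of the torus meets the interiors of both rectangles *)
Definition hsees (R : realType) (W H : R) (a b : trect R) : Prop :=
  exists c : R, in_arc H (ry a) (rh a) c /\ in_arc H (ry b) (rh b) c.

(* some vertical line x = c of the torus meets the interiors of both rectangles *)
Definition vsees (R : realType) (W H : R) (a b : trect R) : Prop :=
  exists c : R, in_arc W (rx a) (rw a) c /\ in_arc W (rx b) (rw b) c.

Definition sees (R : realType) (W H : R) (a b : trect R) : Prop :=
  hsees W H a b \/ vsees W H a b.

Definition overlap (R : realType) (W H : R) (a b : trect R) : Prop :=
  exists s t : R,
    in_arc W (rx a) (rw a) s /\ in_arc W (rx b) (rw b) s /\
    in_arc H (ry a) (rh a) t /\ in_arc H (ry b) (rh b) t.

Definition TRVG_rep (R : realType) (W H : R) (T : finType) (e : rel T)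
    (rect : T -> trect R) : Prop :=
  [/\ forall v, rect_ok W H (rect v),
      forall u v, u != v -> ~ overlap W H (rect u) (rect v)
    & forall u v, u != v -> (e u v <-> sees W H (rect u) (rect v))].

From HB Require Import structures.
From mathcomp Require Import all_boot all_order all_algebra.
From mathcomp Require Import boolp reals lra.
Import Order.TTheory GRing.Theory Num.Theory.
Local Open Scope ring_scope.

(* Only horizontal visibility matters, and it is a statement about the vertical
   arcs of the rectangles on the circle R/HZ.  Rectangles of the same part do not
   see each other, so their open vertical arcs are pairwise disjoint, and hence so
   are their half-open arcs [y, y+h).  If g_i sees r_j horizontally, then either
   the bottom of g_i lies in the half-open arc of r_j, or the bottom of r_j lies in
   the open arc of g_i.  By disjointness the first happens for at most one j per
   i, and the second for at most one i per j, so sum alpha_i <= p + q. *)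

Definition in_arc_co {R : realType} (L y h t : R) : Prop :=
  exists k : int, y <= t + k%:~R * L < y + h.

Definition arcs_meet {R : realType} (L y1 h1 y2 h2 : R) : Prop :=
  exists c, in_arc L y1 h1 c /\ in_arc L y2 h2 c.

Lemma in_arc_co_of_in_arc {R : realType} (L y h t : R) :
  in_arc L y h t -> in_arc_co L y h t.
Proof. by move=> [k /andP[k1 k2]]; exists k; rewrite k2 ltW. Qed.

Lemma arcs_meet_start {R : realType} (L x w y h : R) :
  arcs_meet L x w y h -> in_arc_co L y h x \/ in_arc L x w y.
Proof.
move=> [c [[k /andP[k1 k2]] [m /andP[m1 m2]]]].
have [le|lt] := lerP (c + k%:~R * L - x) (c + m%:~R * L - y).
  by left; exists (m - k); rewrite intrB mulrBl; apply/andP; split; lra.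
by right; exists (k - m); rewrite intrB mulrBl; apply/andP; split; lra.
Qed.

(* The shorter of the two arcs beyond the common point t yields a common interior point. *)
Lemma in_arc_co_meet {R : realType} (L y1 h1 y2 h2 t : R) :
  in_arc_co L y1 h1 t -> in_arc_co L y2 h2 t -> arcs_meet L y1 h1 y2 h2.
Proof.
move=> [k /andP[k1 k2]] [m /andP[m1 m2]].
set d1 := y1 + h1 - (t + k%:~R * L); set d2 := y2 + h2 - (t + m%:~R * L).
have [le|lt] := lerP d1 d2.
  by exists (t + d1 / 2); split; [exists k | exists m];
    apply/andP; split; rewrite /d1 /d2 in le *; lra.
by exists (t + d2 / 2); split; [exists k | exists m];
  apply/andP; split; rewrite /d1 /d2 in lt *; lra.
Qed.

Lemma card_in_arc_co_le1 {R : realType} {T : finType} {L : R} {X : {set T}}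
    {y h : T -> R} (t : R) :
  {in X &, forall u v, u != v -> ~ arcs_meet L (y u) (h u) (y v) (h v)} ->
  (#|[set u in X | `[< in_arc_co L (y u) (h u) t >]]| <= 1)%N.
Proof.
move=> disj; apply/card_le1_eqP => u v; rewrite !inE.
move=> /andP[uX /asboolP tu] /andP[vX /asboolP tv].
have [//|uv] := eqVneq u v.
by case: (disj u v uX vX uv); apply: in_arc_co_meet tu tv.
Qed.

Lemma card_set_sum {T : finType} (X : {set T}) (P : pred T) :
  #|[set x in X | P x]| = (\sum_(x in X) P x)%N.
Proof.
by rewrite -sum1dep_card big_mkcondr /=; apply: eq_bigr => x _; case: (P x).
Qed.

Lemma sum_card_set_rel {T : finType} (A B : {set T}) (q : rel T) :
  (\sum_(i in A) #|[set j in B | q i j]|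
     = \sum_(j in B) #|[set i in A | q i j]|)%N.
Proof.
under eq_bigr do rewrite card_set_sum.
by rewrite exchange_big /=; apply: eq_bigr => j _; rewrite card_set_sum.
Qed.

Lemma sum_card_rel_le {T : finType} (A B : {set T}) (s p q : rel T) :
  (forall i j, s i j -> p i j || q i j) ->
  (forall i, i \in A -> #|[set j in B | p i j]| <= 1)%N ->
  (forall j, j \in B -> #|[set i in A | q i j]| <= 1)%N ->
  (\sum_(i in A) #|[set j in B | s i j]| <= #|B| + #|A|)%N.
Proof.
move=> spq p1 q1.
apply: (@leq_trans
  (\sum_(i in A) (#|[set j in B | p i j]| + #|[set j in B | q i j]|))).
  apply: leq_sum => i _; apply: leq_trans (leq_card_setU _ _).
  apply: subset_leq_card; apply/subsetP => j; rewrite !inE.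
  by case/andP=> -> /spq.
rewrite big_split /= addnC sum_card_set_rel leq_add //.
- by rewrite -sum1_card; apply: leq_sum.
- by rewrite -sum1_card; apply: leq_sum.
Qed.

Theorem lemma3 (R : realType) (W H : R) (T : finType) (e : rel T)
    (rect : T -> trect R) (A : {set T}) :
  0 < W -> 0 < H ->
  symmetric e -> irreflexive e ->
  TRVG_rep W H e rect ->
  (forall u v, e u v -> (u \in A) != (v \in A)) ->
  (\sum_(i in A) #|[set j in ~: A | `[< hsees W H (rect i) (rect j) >]]|
     <= #|~: A| + #|A|)%N.
Proof.
move=> _ _ _ _ [_ _ e_sees] bip.
pose y u := ry (rect u); pose h u := rh (rect u).
have part_disj u v : u != v -> (u \in A) = (v \in A) ->
    ~ arcs_meet H (y u) (h u) (y v) (h v).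
  move=> uv uvA meet; have /bip : e u v by apply/(e_sees u v uv); left.
  by rewrite uvA eqxx.
have disjA : {in A &, forall u v, u != v -> ~ arcs_meet H (y u) (h u) (y v) (h v)}.
  by move=> u v uA vA uv; apply: part_disj; rewrite ?uA ?vA.
have disjB : {in ~: A &, forall u v, u != v -> ~ arcs_meet H (y u) (h u) (y v) (h v)}.
  move=> u v; rewrite !inE => /negbTE uA /negbTE vA uv.
  by apply: part_disj; rewrite ?uA ?vA.
apply: (sum_card_rel_le _ _ _ (fun i j => `[< in_arc_co H (y j) (h j) (y i) >])
                              (fun i j => `[< in_arc H (y i) (h i) (y j) >])).
- move=> i j /asboolP/arcs_meet_start [] ?; apply/orP; [left | right];
  exact/asboolP.
- by move=> i _; apply: card_in_arc_co_le1 (y i) disjB.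
- move=> j _; apply: leq_trans (card_in_arc_co_le1 (y j) disjA).
  by apply: subset_leq_card; apply/subsetP => i; rewrite !inE =>
    /andP[-> /asboolP/in_arc_co_of_in_arc/asboolP].
Qed.
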